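(* Identify the letters $a_i$ with the positive integers $i$. Let $\mathbf{NCQSym}$ be the Hopf algebra with basis $(\mathbf{M}_u)$ indexed by packed words $u$ (including the empty word), where $\mathbf{M}_u=\sum_{\mathrm{tass}(w)=u} w\in\mathbb{K}\langle A\rangle$, with product the product of $\mathbb{K}\langle A\rangle$ and coproduct $\Delta\mathbf{M}_u=\sum_{k=0}^{m}\mathbf{M}_{u_{\le k}}\otimes\mathbf{M}_{\mathrm{tass}(u_{>k})}$, where $m$ is the greatest letter of $u$, $u_{\le k}$ (resp. $u_{>k}$) is the subword of $u$ formed by its letters $\le k$ (resp. $>k$). Let $\mathbf{PQSym}^*$ be the graded dual Hopf algebra of $\mathbf{PQSym}$, with $(\mathbf{G}_{\mathbf a})$ the basis dual to $(\mathbf{F}_{\mathbf a})$. Then the linear map $\mathbf{NCQSym}\to\mathbf{PQSym}^*$, $\mathbf{M}_u\mapsto\sum_{\mathrm{tass}(\mathbf a)=u}\mathbf{G}_{\mathbf a}$ (sum over parking functions $\mathbf a$), is an injective morphism of Hopf algebras.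
   Context: $\mathbb{K}$ is a field of characteristic $0$, $A=\{a_1<a_2<\cdots\}$, and $\mathbb{K}\langle A\rangle=\varprojlim \mathbb{K}\langle a_1,\dots,a_n\rangle$. For a word $w$ whose distinct letters are $b_1<\dots<b_r$, $\mathrm{tass}(w)$ is the image of $w$ under the monoid morphism $b_j\mapsto j$; $w$ is packed if $\mathrm{tass}(w)=w$. A parking function of length $n$ is a word $\mathbf a$ of length $n$ over positive integers whose nondecreasing rearrangement $b_1\le\dots\le b_n$ satisfies $b_i\le i$ for all $i$. Parkization: for a word $w$ of length $n$ over positive integers let $d(w)=\min\{i : |\{j: w_j\le i\}|<i\}$; if $d(w)=n+1$ then $\mathrm{park}(w)=w$; otherwise let $w'$ be obtained from $w$ by decreasing by $1$ every letter $>d(w)$, and set $\mathrm{park}(w)=\mathrm{park}(w')$. $\mathbf{PQSym}$ is the Hopf algebra with basis $(\mathbf F_{\mathbf a})$ indexed by parking functions, product $\mathbf F_{\mathbf a'}\mathbf F_{\mathbf a''}=\sum_{\mathbf a\in \mathbf a'\,\sqcup\!\sqcup\,(\mathbf a''[n'])}\mathbf F_{\mathbf a}$, where $n'$ is the length of $\mathbf a'$, $\mathbf a''[n']$ is $\mathbf a''$ with $n'$ added to each letter and $\sqcup\!\sqcup$ is the shuffle product, and coproduct $\Delta\mathbf F_{\mathbf a}=\sum_{\mathbf a=uv}\mathbf F_{\mathrm{park}(u)}\otimes\mathbf F_{\mathrm{park}(v)}$ (sum over factorizations of $\mathbf a$ as a concatenation of two possibly empty words). *)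

From mathcomp Require Import all_boot all_algebra.
Set Implicit Arguments. Unset Strict Implicit. Unset Printing Implicit Defensive.
Import GRing.Theory.
Local Open Scope ring_scope.

(* Letters a_i are identified with positive integers i; words are seq nat. *)
Definition word := seq nat.

Definition tass (w : word) : word :=
  [seq (index x (sort leq (undup w))).+1 | x <- w].
Definition packed (w : word) : bool := tass w == w.

Definition parking (a : word) : bool :=
  let s := sort leq a in
  all (fun i => (0 < nth 0%N s i <= i.+1)%N) (iota 0 (size a)).

Definition dpark (w : word) : nat :=
  nth (size w).+1 [seq i <- iota 1 (size w).+1 | (count (fun x => x <= i)%N w < i)%N] 0.
Definition parkstep (w : word) : word :=
  [seq if (dpark w < x)%N then x.-1 else x | x <- w].
Fixpoint park_fuel (n : nat) (w : word) : word :=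
  if n is n'.+1 then
    if dpark w == (size w).+1 then w else park_fuel n' (parkstep w)
  else w.
(* each step strictly decreases the sum of letters, so this fuel suffices *)
Definition park (w : word) : word := park_fuel (sumn w).+1 w.

Fixpoint allwords (n m : nat) : seq word :=
  if n is n'.+1 then [seq a :: w | a <- iota 1 m, w <- allwords n' m]
  else [:: [::]].
Definition packed_words (n : nat) : seq word := filter packed (allwords n n).

Fixpoint shuffle (u : word) : word -> seq word :=
  match u with
  | [::] => fun v => [:: v]
  | x :: u' => fix sh (v : word) : seq word :=
      match v with
      | [::] => [:: u]
      | y :: v' => [seq x :: t | t <- shuffle u' v] ++ [seq y :: t | t <- sh v']
      end
  end.

Section Algebras.
Variable K : fieldType.

(* ---------- K<A> : series as functions on words; product of K<A> ---------- *)
Definition sermul (F G : word -> K) : word -> K :=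
  fun w => \sum_(i < (size w).+1) F (take i w) * G (drop i w).

(* ---------- NCQSym: an element sum_u f(u) M_u is coded by f : word -> K,
   supported on finitely many packed words ---------- *)
Definition isNCQ (f : word -> K) : Prop :=
  (forall w, ~~ packed w -> f w = 0) /\ exists N, forall w, (N < size w)%N -> f w = 0.

(* realization in K<A>: sum_u f(u) M_u = sum_w f(tass w) w *)
Definition realize (f : word -> K) : word -> K :=
  fun w => if all (fun x => 0 < x)%N w then f (tass w) else 0.

(* product = product of K<A>; the coefficient of M_w (w packed) is the
   coefficient of the word w in the realization *)
Definition NCQ_mul (f g : word -> K) : word -> K :=
  fun w => if packed w then sermul (realize f) (realize g) w else 0.
Definition NCQ_one : word -> K := fun w => (w == [::])%:R.
Definition NCQ_counit (f : word -> K) : K := f [::].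
Definition restr_le (k : nat) (u : word) : word := [seq x <- u | (x <= k)%N].
Definition restr_gt (k : nat) (u : word) : word := [seq x <- u | (k < x)%N].
Definition maxletter (u : word) : nat := foldr maxn 0%N u.
(* Delta M_u = sum_{k=0}^{m} M_{u_{<=k}} (x) M_{tass(u_{>k})}; tensors are
   coded by functions on pairs of words *)
Definition NCQ_comul (f : word -> K) : word * word -> K :=
  fun p => \sum_(u <- packed_words (size p.1 + size p.2))
     f u * \sum_(k < (maxletter u).+1)
        ((restr_le k u == p.1) && (tass (restr_gt k u) == p.2))%:R.

(* ---------- PQSym and its graded dual: an element sum_a g(a) G_a is coded
   by g : word -> K (supported on parking functions) ---------- *)
(* coproduct of PQSym: Delta F_a = sum_{a = uv} F_park(u) (x) F_park(v) *)
Definition DeltaF (a : word) : seq (word * word) :=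
  [seq (park (take i a), park (drop i a)) | i <- iota 0 (size a).+1].
(* product of PQSym: F_b F_c = sum_{a in b shuffle c[n']} F_a *)
Definition shiftw (n : nat) (c : word) : word := [seq (x + n)%N | x <- c].
Definition FF_mul (b c : word) : seq word := shuffle b (shiftw (size b) c).

(* dual structure: transposes of the coproduct/product of PQSym *)
Definition PQd_mul (g h : word -> K) : word -> K :=
  fun a => if parking a then \sum_(p <- DeltaF a) g p.1 * h p.2 else 0.
Definition PQd_one : word -> K := fun a => (a == [::])%:R.
Definition PQd_counit (g : word -> K) : K := g [::].
Definition PQd_comul (g : word -> K) : word * word -> K :=
  fun p => if parking p.1 && parking p.2 then \sum_(a <- FF_mul p.1 p.2) g a else 0.

Definition phi (f : word -> K) : word -> K :=
  fun a => if parking a then f (tass a) else 0.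
Definition phi2 (T : word * word -> K) : word * word -> K :=
  fun p => if parking p.1 && parking p.2 then T (tass p.1, tass p.2) else 0.

End Algebras.

From mathcomp Require Import all_boot all_algebra zify.

Set Implicit Arguments.
Unset Strict Implicit.
Unset Printing Implicit Defensive.

Import GRing.Theory.

(* Both products are sums over the cuts a = vw: in K<A> the
   coefficient of a word only depends on the standardizations of its factors,
   and on the dual side parkization preserves standardization, so the two sums
   agree cut by cut.  For the coproduct, the letters of a parking function a of
   length n are at most n, so those of b[n] lie above them; standardizing a
   shuffle of a and b[n] therefore yields the corresponding shuffle of tass a
   and of tass b shifted by the number r of distinct letters of a.  A packed
   word u occurs in that shuffle exactly once when u_{<=r} = tass a and u_{>r}
   is the shifted tass b, and r is then the only cut of u that contributes
   M_{tass a} (x) M_{tass b} to Delta M_u.  Injectivity holds because a packed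
   word is a parking function equal to its own standardization. *)

Definition letters (w : word) : seq nat := sort leq (undup w).

Lemma letters_uniq w : uniq (letters w).
Proof. by rewrite sort_uniq undup_uniq. Qed.

Lemma mem_letters w : letters w =i w.
Proof. by move=> x; rewrite mem_sort mem_undup. Qed.

Lemma sorted_letters w : sorted leq (letters w).
Proof. exact: sort_sorted leq_total _. Qed.

Lemma ltn_sorted_letters w : sorted ltn (letters w).
Proof. by rewrite ltn_sorted_uniq_leq letters_uniq sorted_letters. Qed.

Lemma letters_perm a b : perm_eq a b -> letters a = letters b.
Proof.
move=> pab; apply/perm_sortP; [exact: leq_total | exact: leq_trans | exact: anti_leq|].
by apply: uniq_perm; rewrite ?undup_uniq // => x; rewrite !mem_undup (perm_mem pab).
Qed.

Lemma letters_cat p q N : all (fun z => z <= N) p -> all (fun z => N < z) q ->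
  letters (p ++ q) = letters p ++ letters q.
Proof.
move=> /allP pN /allP Nq.
apply: (sorted_eq leq_trans anti_leq (sorted_letters _)).
  rewrite (sorted_pairwise leq_trans) pairwise_cat -!(sorted_pairwise leq_trans).
  rewrite !sorted_letters !andbT; apply/allrelP => x y; rewrite !mem_letters.
  by move=> /pN xN /Nq Ny; exact: ltnW (leq_ltn_trans xN Ny).
apply: uniq_perm; rewrite ?letters_uniq //.
  rewrite cat_uniq !letters_uniq andbT /=; apply/hasPn => y; rewrite !mem_letters.
  by move=> /Nq Ny; apply/negP => /pN yN; move: (leq_ltn_trans yN Ny); rewrite ltnn.
by move=> x; rewrite mem_cat !mem_letters mem_cat.
Qed.

Lemma tassE w : tass w = [seq (index x (letters w)).+1 | x <- w].
Proof. by []. Qed.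

Lemma index_letters_mono w :
  {in w &, {mono index^~ (letters w) : x y / x <= y}}.
Proof.
move=> x y /=; rewrite -[x \in w]mem_letters -[y \in w]mem_letters => xw yw.
apply/idP/idP => [|xy].
  exact: (sorted_leq_index leq_trans leqnn (sorted_letters w) _ _ xw yw).
rewrite leqNgt; apply/negP => /(sorted_ltn_index ltn_trans (ltn_sorted_letters w) _ _ yw xw).
by rewrite ltnNge xy.
Qed.

Lemma undup_map_in (T1 T2 : eqType) (h : T1 -> T2) (w : seq T1) :
  {in w &, injective h} -> undup (map h w) = map h (undup w).
Proof.
elim: w => //= x w IH hinj.
have hinj' : {in w &, injective h}.
  by move=> a b aw bw; apply: hinj; rewrite inE ?aw ?bw orbT.
have -> : (h x \in map h w) = (x \in w).
  apply/mapP/idP => [[y yw /hinj ->]|xw]; rewrite ?inE ?eqxx ?yw ?orbT //.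
  by exists x.
by case: (x \in w); rewrite /= (IH hinj').
Qed.

Lemma index_map_in (T1 T2 : eqType) (h : T1 -> T2) (w s : seq T1) x :
  {in w &, injective h} -> x \in w -> all (mem w) s ->
  index (h x) (map h s) = index x s.
Proof.
move=> hinj xw; elim: s => //= y s IH /andP[yw sw].
by rewrite IH //; congr (if _ then _ else _); apply/eqP/eqP => [/hinj->|->].
Qed.

Lemma tass_map_mono (h : nat -> nat) w :
  {in w &, {mono h : x y / x <= y}} -> tass (map h w) = tass w.
Proof.
move=> hmono.
have hinj : {in w &, injective h}.
  move=> x y xw yw hxy; apply/eqP.
  by rewrite eqn_leq -(hmono x y) // -(hmono y x) // hxy leqnn.
have letters_map : letters (map h w) = map h (letters w).
  rewrite /letters (undup_map_in hinj).
  apply: (@homo_sort_map_in _ _ (mem w)).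
  - move=> x y xw yw /= /andP[a b]; apply: hinj => //; apply/eqP; rewrite eqn_leq a b //.
  - by move=> x y z /= _ _ _; exact: leq_trans.
  - by move=> x y _ _; exact: leq_total.
  - by move=> x y xw yw; rewrite hmono.
  - by apply/allP => x; rewrite mem_undup.
rewrite !tassE letters_map -map_comp; apply/eq_in_map => x xw /=.
by rewrite (index_map_in hinj xw) //; apply/allP => y; rewrite mem_letters.
Qed.

Lemma tass_idem w : tass (tass w) = tass w.
Proof.
rewrite [X in tass X = _](tassE w) tass_map_mono // => x y xw yw.
by rewrite ltnS index_letters_mono.
Qed.

Lemma packed_tass w : packed (tass w).
Proof. by rewrite /packed tass_idem. Qed.

Lemma tass_take i w : tass (take i (tass w)) = tass (take i w).
Proof.
rewrite [X in tass (take i X)](tassE w) -map_take tass_map_mono //.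
move=> x y /mem_take xw /mem_take yw.
by rewrite ltnS index_letters_mono.
Qed.

Lemma tass_drop i w : tass (drop i (tass w)) = tass (drop i w).
Proof.
rewrite [X in tass (drop i X)](tassE w) -map_drop tass_map_mono //.
move=> x y /mem_drop xw /mem_drop yw.
by rewrite ltnS index_letters_mono.
Qed.

Lemma size_tass w : size (tass w) = size w.
Proof. exact: size_map. Qed.

Lemma all_gt0_tass w : all (fun x => 0 < x) (tass w).
Proof. by apply/allP => x /mapP[y _ ->]. Qed.

Lemma letters_tass w : letters (tass w) = iota 1 (size (letters w)).
Proof.
apply: (sorted_eq leq_trans anti_leq (sorted_letters _) (iota_sorted _ _)).
apply: uniq_perm; rewrite ?letters_uniq ?iota_uniq // => x.
rewrite mem_letters mem_iota add1n; apply/mapP/idP => [[y yw ->]|].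
  by rewrite !ltnS index_mem mem_letters.
case: x => // j; rewrite ltnS => /= js.
exists (nth 0 (letters w) j); last by rewrite index_uniq ?letters_uniq.
by rewrite -mem_letters mem_nth.
Qed.

Lemma mem_tass w x : (x \in tass w) = (0 < x <= size (letters w)).
Proof. by rewrite -mem_letters letters_tass mem_iota add1n ltnS. Qed.

Lemma shiftw_tass r w : tass (shiftw r w) = tass w.
Proof. by rewrite tass_map_mono // => x y _ _; rewrite leq_add2r. Qed.

Lemma sorted_nth_count (s : seq nat) j k : sorted leq s -> j < size s ->
  (nth 0 s j <= k) = (j < count (fun x => x <= k) s).
Proof.
elim: s j => //= x s IH j xs.
have ss : sorted leq s := path_sorted xs.
have above_x : k < x -> count (fun x => x <= k) s = 0.
  move=> kx; apply/eqP; rewrite -leqn0 leqNgt -has_count; apply/hasPn => y ys.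
  by rewrite -ltnNge (leq_trans kx) //; move/allP: (order_path_min leq_trans xs); apply.
case: j => [|j] /=; rewrite ?ltnS => js.
  by case: (leqP x k) => kx; [rewrite add1n | rewrite add0n above_x].
rewrite IH //; case: (leqP x k) => kx; first by rewrite add1n ltnS.
by rewrite add0n above_x.
Qed.

Lemma parkingP a : parking a <->
  all (fun x => 0 < x) a /\
  forall i, 0 < i <= size a -> i <= count (fun x => x <= i) a.
Proof.
rewrite /parking; set s := sort leq a.
have ss : sorted leq s by exact: sort_sorted leq_total _.
have sz : size s = size a by rewrite size_sort.
split.
  move/allP => H; split.
    apply/allP => x; rewrite -(perm_mem (permEl (perm_sort leq a))) -/s => xs.
    have := H (index x s); rewrite mem_iota add0n -sz index_mem xs.
    by rewrite nth_index // => /(_ isT) /andP[].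
  case=> // i /andP[_ il]; have := H i; rewrite mem_iota add0n il.
  by move=> /(_ isT) /andP[_]; rewrite sorted_nth_count ?sz // /s count_sort.
move=> [a0 C]; apply/allP => j; rewrite mem_iota add0n => /= ja.
apply/andP; split.
  by move/allP: a0; apply; rewrite -(perm_mem (permEl (perm_sort leq a))) -/s mem_nth // sz.
by rewrite sorted_nth_count ?sz // /s count_sort; apply: C.
Qed.

Lemma count_le_iota1 i m : count (fun x => x <= i) (iota 1 m) = minn i m.
Proof.
by elim: m => // m IH; rewrite -[m.+1]addn1 iotaD count_cat IH /= addn0 add1n; lia.
Qed.

Lemma parking_tass w : parking (tass w).
Proof.
apply/parkingP; split=> [|i /andP[_]]; first exact: all_gt0_tass.
rewrite size_tass => iw; case: (leqP i (size (letters w))) => ir.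
  apply: leq_trans (count_undup _ _).
  by rewrite -(count_sort leq) -/(letters _) letters_tass count_le_iota1 (minn_idPl ir).
rewrite (eq_in_count (a2 := predT)) ?count_predT ?size_tass // => x.
by rewrite mem_tass => /andP[_ xr]; rewrite /= ltnW // (leq_ltn_trans xr ir).
Qed.

Lemma packed_parking u : packed u -> parking u.
Proof. by move/eqP <-; exact: parking_tass. Qed.

Lemma parking_le a : parking a -> all (fun x => x <= size a) a.
Proof.
move/parkingP => [_ C]; case: (posnP (size a)) => [/size0nil->//|a0].
by rewrite all_count eqn_leq count_size C // a0 leqnn.
Qed.

Lemma dpark_spec w : let d := dpark w in
  [/\ 0 < d <= (size w).+1, count (fun x => x <= d) w < d &
      forall j, 0 < j < d -> j <= count (fun x => x <= j) w].
Proof.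
rewrite /dpark; set P := (fun i => _); set s := iota 1 (size w).+1.
have -> : forall d, nth d (filter P s) 0 = nth d s (find P s).
  by move=> d; elim: s => //= x s IH; case: (P x).
have hs : has P s.
  apply/hasP; exists (size w).+1; first by rewrite mem_iota add1n ltnS leqnn.
  by rewrite /P ltnS count_size.
have fs : find P s < (size w).+1 by rewrite -(size_iota 1 (size w).+1) -has_find.
rewrite nth_iota // add1n; split.
- by rewrite ltnS.
- by have := nth_find 0 hs; rewrite nth_iota // add1n.
- case=> // j /andP[_]; rewrite ltnS => jf.
  have := before_find 0 jf; rewrite nth_iota ?add1n; last exact: ltn_trans jf fs.
  by rewrite /P => /negbT; rewrite -leqNgt.
Qed.

Lemma count_leq_split (w : word) d :
  count (fun x => x <= d) w = count (fun x => x < d) w + count_mem d w.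
Proof. by elim: w => //= x w ->; case: (ltngtP x d) => _ /=; lia. Qed.

Lemma dpark_notin w : dpark w <= size w -> dpark w \notin w.
Proof.
have [/andP[d0 _] dlt dmin] := dpark_spec w; set d := dpark w in d0 dlt dmin * => _.
have below : d.-1 <= count (fun x => x < d) w.
  rewrite (eq_count (a2 := fun x => x <= d.-1)) => [|x]; last by rewrite /=; lia.
  by case: (posnP d.-1) => [->//|d1]; apply: dmin; rewrite d1 ltn_predL.
(* At least [d.-1] letters are below [d] but fewer than [d] are at most [d]. *)
by apply/count_memPn; move: dlt; rewrite count_leq_split; lia.
Qed.

Lemma tass_parkstep w : dpark w <= size w -> tass (parkstep w) = tass w.
Proof.
move/dpark_notin => dw; apply: tass_map_mono => x y xw yw.
have xd : x != dpark w by apply: contraNneq dw => <-.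
have yd : y != dpark w by apply: contraNneq dw => <-.
by case: (ltnP (dpark w) x); case: (ltnP (dpark w) y); lia.
Qed.

Lemma tass_park_fuel n w : tass (park_fuel n w) = tass w.
Proof.
elim: n w => //= n IH w; case: eqP => // dw.
rewrite IH tass_parkstep //; have [/andP[_]] := dpark_spec w.
by rewrite leq_eqVlt ltnS => /orP[/eqP|].
Qed.

Lemma tass_park w : tass (park w) = tass w.
Proof. exact: tass_park_fuel. Qed.

Lemma sumn_decr_above w d :
  sumn [seq if d < x then x.-1 else x | x <- w] + count (fun x => d < x) w = sumn w.
Proof. by elim: w => //= x w <-; case: ltnP => /= xd; lia. Qed.

Lemma parking_park_fuel n w : all (fun x => 0 < x) w -> sumn w < n ->
  parking (park_fuel n w).
Proof.
elim: n w => // n IH w w0 wn /=.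
have [/andP[d0 dle] dlt dmin] := dpark_spec w.
case: eqP => [dw|/eqP dw].
  by apply/parkingP; split=> // i /andP[i0 iw]; apply: dmin; rewrite i0 dw ltnS.
set d := dpark w in d0 dle dlt dmin dw *.
have dw' : d <= size w by rewrite -ltnS ltn_neqAle dw dle.
have above : has (fun x => d < x) w.
  have := count_predC (fun x => x <= d) w.
  rewrite has_count (@eq_count _ (fun x => d < x) (predC (fun x => x <= d))) => [|x].
    lia.
  by rewrite /= ltnNge.
apply: IH.
  apply/allP => _ /mapP[x xw ->]; have := allP w0 x xw.
  by case: ifP => //; lia.
rewrite -ltnS; apply: leq_trans wn; rewrite ltnS -(sumn_decr_above w d).
by rewrite has_count in above; rewrite -{1}[sumn _]addn0 ltn_add2l.
Qed.

Lemma parking_park w : all (fun x => 0 < x) w -> parking (park w).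
Proof. by move=> w0; apply: parking_park_fuel. Qed.

Lemma shuffle_nilr u : shuffle u [::] = [:: u].
Proof. by case: u. Qed.

Lemma shuffle_cons x u y v : shuffle (x :: u) (y :: v) =
  [seq x :: t | t <- shuffle u (y :: v)] ++ [seq y :: t | t <- shuffle (x :: u) v].
Proof. by []. Qed.

Lemma shuffle_map (h : nat -> nat) u v :
  map (map h) (shuffle u v) = shuffle (map h u) (map h v).
Proof.
elim: u v => [|x u IHu] v //; elim: v => [|y v IHv]; first by rewrite !shuffle_nilr.
change (map (map h) (shuffle (x :: u) (y :: v)) = shuffle (h x :: map h u) (h y :: map h v)).
by rewrite !shuffle_cons map_cat -(IHu (y :: v)) -IHv -!map_comp.
Qed.

Lemma perm_shuffle u v w : w \in shuffle u v -> perm_eq w (u ++ v).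
Proof.
elim: u v w => [|x u IHu] v w; first by rewrite inE => /eqP->.
elim: v w => [|y v IHv] w; first by rewrite shuffle_nilr inE cats0 => /eqP->.
rewrite shuffle_cons mem_cat => /orP[] /mapP[t ht ->]; first by rewrite perm_cons IHu.
by rewrite -[y :: v]cat1s perm_sym perm_catCA /= perm_cons perm_sym IHv.
Qed.

Lemma count_map_cons (T : eqType) (x z : T) u (S : seq (seq T)) :
  count_mem (z :: u) (map (cons x) S) = (x == z) * count_mem u S.
Proof.
rewrite count_map; case: eqP => [<-|xz]; last first.
  by rewrite (eq_count (a2 := pred0)) ?count_pred0 // => t /=; rewrite eqseq_cons; case: eqP.
by rewrite mul1n; apply: eq_count => t /=; rewrite eqseq_cons eqxx.
Qed.

Lemma eq_filter_all (T : eqType) (P : pred T) (u v : seq T) :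
  all P v -> (v == u) = (filter P u == v) && all P u.
Proof.
move=> vP; apply/eqP/andP => [<-|[/eqP <- uP]]; first by rewrite (all_filterP vP).
by rewrite (all_filterP uP).
Qed.

Lemma count_shuffle (P : pred nat) u v w : all P u -> all (predC P) v ->
  count_mem w (shuffle u v) = (filter P w == u) && (filter (predC P) w == v).
Proof.
elim: u v w => [|x u IHu] v w uP vP.
  rewrite /= addn0 (eq_filter_all _ vP) andbC; congr (_ && _).
  by rewrite all_predC has_filter negbK.
elim: v w vP => [|y v IHv] w vP.
  rewrite shuffle_nilr /= addn0 (eq_filter_all _ uP); congr (_ && _).
  by rewrite -(negbK (all P w)) -has_predC has_filter negbK.
have /andP[Px uP'] : P x && all P u := uP.
have /andP[Py vP'] : predC P y && all (predC P) v := vP.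
case: w => [|z w]; first by rewrite shuffle_cons count_cat !count_map !count_pred0.
rewrite shuffle_cons count_cat !count_map_cons IHu // IHv //=.
case: (boolP (P z)) => Pz /=.
  have -> : (y == z) = false by apply/eqP => yz; move: Py; rewrite /= yz Pz.
  by rewrite eqseq_cons (eq_sym z); case: (x == z); rewrite ?mul0n ?mul1n ?addn0.
have -> : (x == z) = false by apply/eqP => xz; move: Pz; rewrite -xz Px.
by rewrite eqseq_cons (eq_sym z); case: (y == z); rewrite ?mul0n ?mul1n ?andbF.
Qed.

Lemma tass_shuffle u v N : all (fun z => z <= N) u -> all (fun z => N < z) v ->
  map tass (shuffle u v) = shuffle (tass u) (shiftw (size (letters u)) (tass v)).
Proof.
move=> uN vN; pose h z := (index z (letters u ++ letters v)).+1.
have -> : map tass (shuffle u v) = map (map h) (shuffle u v).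
  apply/eq_in_map => w /perm_shuffle uvw.
  by rewrite tassE (letters_perm uvw) (letters_cat uN vN).
rewrite shuffle_map tassE /shiftw tassE -map_comp; congr shuffle.
  by apply/eq_in_map => z zu; rewrite /h index_cat mem_letters zu.
apply/eq_in_map => z zv /=.
have zu : z \notin u by apply: contraTN (allP vN z zv) => /(allP uN); rewrite -leqNgt.
by rewrite /h index_cat mem_letters (negbTE zu) addnC addSn.
Qed.

Lemma parking_shuffle a b c : parking a -> parking b -> c \in FF_mul a b -> parking c.
Proof.
move=> pa pb /perm_shuffle abc; have aa := parking_le pa.
move/parkingP: pa => [a0 Ca]; move/parkingP: pb => [b0 Cb].
have sc : size c = size a + size b by rewrite (perm_size abc) size_cat size_map.
apply/parkingP; split.
  apply/allP => x; rewrite (perm_mem abc) mem_cat => /orP[/(allP a0)//|].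
  by case/mapP => y /(allP b0) y0 ->; rewrite addn_gt0 y0.
move=> i /andP[i0 ic]; rewrite (permP abc) count_cat.
case: (leqP i (size a)) => ia.
  by apply: leq_trans (Ca i _) (leq_addr _ _); rewrite i0 ia.
have all_a : count (fun x => x <= i) a = size a.
  by apply/eqP; rewrite -all_count; apply: sub_all aa => x /leq_trans; apply; exact: ltnW.
have shifted : i - size a <= count (fun x => x <= i) (shiftw (size a) b).
  rewrite count_map (eq_count (a2 := fun x => x <= i - size a)) => [|x /=]; last by lia.
  by apply: Cb; move: ic; rewrite sc; lia.
by rewrite all_a -leq_subLR.
Qed.

Lemma maxletter_ge u x : x \in u -> x <= maxletter u.
Proof.
elim: u => //= y u IH; rewrite inE => /orP[/eqP->|/IH]; first exact: leq_maxl.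
by move/leq_trans; apply; exact: leq_maxr.
Qed.

Lemma maxletter_mem u : u != [::] -> maxletter u \in u.
Proof.
rewrite /maxletter; elim: u => //= y u IH _.
case: (eqVneq u [::]) => [->|un]; first by rewrite maxn0 inE.
by rewrite inE; case: (leqP y (foldr maxn 0 u)); rewrite ?IH ?orbT ?eqxx.
Qed.

Lemma maxletter_tass w : maxletter (tass w) = size (letters w).
Proof.
case: (eqVneq w [::]) => [->//|wn]; apply/eqP; rewrite eqn_leq.
have tw : tass w != [::] by case: w wn.
have := maxletter_mem tw; rewrite mem_tass => /andP[_ ->] /=.
case: (posnP (size (letters w))) => [->//|r0].
by apply: maxletter_ge; rewrite mem_tass r0 leqnn.
Qed.

Lemma mem_packed u x : packed u -> (x \in u) = (0 < x <= maxletter u).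
Proof. by move/eqP => <-; rewrite mem_tass maxletter_tass. Qed.

Lemma mem_restr_le u k x : packed u -> k <= maxletter u ->
  (x \in restr_le k u) = (0 < x <= k).
Proof.
move=> pu kM; rewrite mem_filter mem_packed //.
apply/andP/andP => [[xk /andP[x0 _]]|[x0 xk]]; split=> //.
by rewrite x0 (leq_trans xk kM).
Qed.

Lemma index_in_iota m n z : m <= z < m + n -> index z (iota m n) = z - m.
Proof.
move=> /andP[mz zn]; have zmn : z - m < n by lia.
by rewrite -{1}(subnKC mz) -(nth_iota 0 m zmn) index_uniq ?iota_uniq ?size_iota.
Qed.

Lemma restr_gt_shiftw u r : packed u ->
  restr_gt r u = shiftw r (tass (restr_gt r u)).
Proof.
move=> pu; set v := restr_gt r u; set M := maxletter u.
have mem_v z : (z \in v) = (r < z <= M).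
  rewrite mem_filter mem_packed //; case: (ltnP r z) => //= rz.
  by rewrite (leq_ltn_trans (leq0n r) rz).
have letters_v : letters v = iota r.+1 (M - r).
  apply: (sorted_eq leq_trans anti_leq (sorted_letters _) (iota_sorted _ _)).
  apply: uniq_perm; rewrite ?letters_uniq ?iota_uniq // => z.
  by rewrite mem_letters mem_v mem_iota; apply/idP/idP => /andP[]; lia.
rewrite tassE letters_v /shiftw -map_comp -{1}(map_id v); apply/eq_in_map => z.
by rewrite mem_v => /andP[rz zM] /=; rewrite index_in_iota; lia.
Qed.

Lemma sum_cuts_packed u X Y r : packed u -> packed Y -> X =i [pred z | 0 < z <= r] ->
  \sum_(k < (maxletter u).+1) ((restr_le k u == X) && (tass (restr_gt k u) == Y)) =
  (restr_le r u == X) && (restr_gt r u == shiftw r Y).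
Proof.
move=> pu /eqP pY memX; set M := maxletter u.
have cut_unique k : k <= M -> restr_le k u = X -> k = r.
  move=> kM ukX; have := memX k; have := memX r.
  by rewrite -ukX !mem_restr_le // !inE leqnn; lia.
have upper_eq : (tass (restr_gt r u) == Y) = (restr_gt r u == shiftw r Y).
  apply/eqP/eqP => [<-|->]; first exact: restr_gt_shiftw.
  by rewrite shiftw_tass.
case: (boolP (restr_le r u == X)) => [/eqP urX|urX]; last first.
  rewrite big1 // => k _; apply/eqP; rewrite eqb0 negb_and.
  by apply/orP; left; apply: contra urX => /eqP /[dup] /(cut_unique _ (ltn_ord k)) <- /eqP.
have rM : r < M.+1.
  case: (posnP r) => [->//|r0].
  rewrite ltnS; apply: maxletter_ge; move: (memX r).
  by rewrite -urX inE leqnn r0 mem_filter => /andP[].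
rewrite (bigD1 (Ordinal rM)) //= urX eqxx upper_eq big1 ?addn0 // => k kr.
case: eqP => // /(cut_unique _ (ltn_ord k)) kr'.
by move: kr; rewrite -val_eqE /= kr' eqxx.
Qed.

Lemma mem_allwords n m w :
  (w \in allwords n m) = (size w == n) && all (fun x => 0 < x <= m) w.
Proof.
elim: n w => [|n IH] w; first by case: w.
apply/allpairsP/idP => [[[a v] [/= ha hv ->]]|].
  by move: ha hv; rewrite IH mem_iota add1n ltnS /= eqSS => -> /andP[-> ->].
case: w => // a v /= /andP[]; rewrite eqSS => sv /andP[ha hv].
by exists (a, v); rewrite /= mem_iota add1n ltnS ha IH sv hv.
Qed.

Lemma allwords_uniq n m : uniq (allwords n m).
Proof.
elim: n => //= n IH; apply: allpairs_uniq => //; first exact: iota_uniq.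
by move=> [a w] [b v] _ _ /= [-> ->].
Qed.

Lemma packed_words_uniq n : uniq (packed_words n).
Proof. exact/filter_uniq/allwords_uniq. Qed.

Lemma tass_packed_words w : tass w \in packed_words (size w).
Proof.
rewrite mem_filter packed_tass mem_allwords size_tass eqxx /=.
apply/allP => x; rewrite mem_tass => /andP[-> xr] /=.
by rewrite (leq_trans xr) // size_sort size_undup.
Qed.

Local Open Scope ring_scope.

Lemma sum_seq_count (R : nmodType) (T : eqType) (s t : seq T) (F : T -> R) :
  uniq t -> {subset s <= t} ->
  \sum_(x <- s) F x = \sum_(y <- t) F y *+ count_mem y s.
Proof.
move=> tu; elim: s => [|x s IH] st; first by rewrite big_nil big1 // => y _; rewrite mulr0n.
rewrite big_cons IH => [|y ys]; last by apply: st; rewrite inE ys orbT.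
have -> : \sum_(y <- t) F y *+ count_mem y (x :: s) =
    \sum_(y <- t) F y *+ (x == y) + \sum_(y <- t) F y *+ count_mem y s.
  by rewrite -big_split; apply: eq_bigr => y _ /=; rewrite -mulrnDr.
rewrite [\sum_(y <- t) _ *+ (x == y)](big_rem x) ?st ?mem_head //= eqxx mulr1n.
suff -> : \sum_(y <- rem x t) F y *+ (x == y) = 0 by rewrite addr0.
apply: big1_seq => y /andP[_]; rewrite (mem_rem_uniq _ tu) inE => /andP[yx _].
by rewrite eq_sym (negbTE yx).
Qed.

Section Morphism.

Variable K : fieldType.
Implicit Types f g : word -> K.

Lemma phi_park f w : all (fun x => 0 < x)%N w -> phi f (park w) = f (tass w).
Proof. by move=> w0; rewrite /phi parking_park // tass_park. Qed.

Lemma realize_gt0 f w : all (fun x => 0 < x)%N w -> realize f w = f (tass w).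
Proof. by rewrite /realize => ->. Qed.

Lemma phi_mul f g a : phi (NCQ_mul f g) a = PQd_mul (phi f) (phi g) a.
Proof.
rewrite /PQd_mul {1}/phi /NCQ_mul; case pa: (parking a) => //.
have /parkingP[a0 _] := pa; rewrite packed_tass /sermul /DeltaF big_map size_tass.
rewrite -[iota 0%N _]/(index_iota 0 (size a).+1) big_mkord; apply: eq_bigr => i _ /=.
have cut_gt0 w : all (fun x => 0 < x)%N w ->
    all (fun x => 0 < x)%N (take i w) && all (fun x => 0 < x)%N (drop i w).
  by rewrite -all_cat cat_take_drop.
have /andP[tl tr] := cut_gt0 _ (all_gt0_tass a).
have /andP[al ar] := cut_gt0 _ a0.
by rewrite !realize_gt0 // !phi_park // tass_take tass_drop.
Qed.

Lemma phi_comul f p : phi2 (NCQ_comul f) p = PQd_comul (phi f) p.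
Proof.
case: p => a b; rewrite /phi2 /PQd_comul /=.
case pa: (parking a); case pb: (parking b) => //=.
set r := size (letters a); set X := tass a; set Y := shiftw r (tass b).
have sep_b : all (fun z => size a < z)%N (shiftw (size a) b).
  have /parkingP[b0 _] := pb.
  by apply/allP => _ /mapP[z /(allP b0) z0 ->]; rewrite -{1}[size a]add0n ltn_add2r.
have tass_FF : map tass (FF_mul a b) = shuffle X Y.
  by rewrite (tass_shuffle (parking_le pa) sep_b) shiftw_tass.
have sep_XY : all (fun z => z <= r)%N X /\ all (predC (fun z => z <= r)%N) Y.
  split; apply/allP => z; first by rewrite mem_tass => /andP[].
  by case/mapP => y /(allP (all_gt0_tass b)) y0 ->; rewrite /= -ltnNge -{1}[r]add0n ltn_add2r.
transitivity (\sum_(w <- shuffle X Y) f w); last first.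
  rewrite -tass_FF big_map; apply: eq_big_seq => c abc.
  by rewrite /phi (parking_shuffle pa pb abc).
rewrite /NCQ_comul /= !size_tass.
rewrite (sum_seq_count (s := shuffle X Y) f (packed_words_uniq (size a + size b))); last first.
  rewrite -tass_FF => _ /mapP[c abc ->].
  suff -> : (size a + size b = size c)%N by exact: tass_packed_words.
  by rewrite (perm_size (perm_shuffle abc)) size_cat size_map.
apply: eq_big_seq => u; rewrite mem_filter => /andP[pu _].
rewrite -natr_sum (sum_cuts_packed (r := r) pu (packed_tass b)) => [|z]; last by rewrite mem_tass.
rewrite mulr_natr (count_shuffle _ sep_XY.1 sep_XY.2).
suff -> : filter (predC (fun z => z <= r)%N) u = restr_gt r u by [].
by apply: eq_filter => z; rewrite /= ltnNge.
Qed.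

Lemma phi_inj f g : isNCQ f -> isNCQ g -> phi f =1 phi g -> f =1 g.
Proof.
move=> [f0 _] [g0 _] fg w; case pw: (packed w); last by rewrite f0 ?g0 ?pw.
by have := fg w; rewrite /phi packed_parking // (eqP pw).
Qed.

End Morphism.

Theorem proposition3p3 (K : fieldType) (charK0 : [pchar K] =i pred0) :
  (* linearity *)
  (forall (c : K) (f g : word -> K), isNCQ f -> isNCQ g ->
     forall a, phi (fun w => c * f w + g w) a = c * phi f a + phi g a) /\
  (* multiplicativity *)
  (forall f g : word -> K, isNCQ f -> isNCQ g ->
     forall a, phi (NCQ_mul f g) a = PQd_mul (phi f) (phi g) a) /\
  (* unit *)
  (forall a, phi (NCQ_one K) a = PQd_one K a) /\
  (* comultiplicativity *)
  (forall f : word -> K, isNCQ f ->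
     forall p, phi2 (NCQ_comul f) p = PQd_comul (phi f) p) /\
  (* counit *)
  (forall f : word -> K, isNCQ f -> PQd_counit (phi f) = NCQ_counit f) /\
  (* injectivity *)
  (forall f g : word -> K, isNCQ f -> isNCQ g ->
     (forall a, phi f a = phi g a) -> forall w, f w = g w).
Proof.
split; first by move=> c f g _ _ a; rewrite /phi; case: parking; rewrite ?mulr0 ?addr0.
split; first by move=> f g _ _; exact: phi_mul.
split.
  by move=> a; rewrite /phi /PQd_one /NCQ_one; case: ifP => [_|]; case: a.
split; first by move=> f _; exact: phi_comul.
split; first by [].
exact: phi_inj.
Qed.
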